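(* Let $R$ be a finite group, let $S\subseteq R$, and let $K,H$ be subgroups of $R$ such that (1) $1<K\trianglelefteq H<R$, (2) $K(S\setminus H)=S\setminus H=(S\setminus H)K$, and (3) $\mathrm{Aut}(R)_S=1$. Then $\mathrm{Cay}(R,S)$ is not a DRR, so $R$ is not DRR-detecting; and if moreover $S=S^{-1}$, then $\mathrm{Cay}(R,S)$ is not a GRR, so $R$ is not GRR-detecting.
   Context: For a group $R$ and $S\subseteq R$, the Cayley digraph $\mathrm{Cay}(R,S)$ has vertex set $R$ and an arc from $r$ to $sr$ whenever $s\in S$. It is a DRR if $\mathrm{Aut}(\mathrm{Cay}(R,S))$ equals the right regular representation $\hat R$, and a GRR if additionally $S=S^{-1}$. $\mathrm{Aut}(R)_S$ is the group of automorphisms of $R$ fixing $S$ setwise. $R$ is DRR-detecting if for every $S\subseteq R$, $\mathrm{Aut}(R)_S=1$ implies $\mathrm{Cay}(R,S)$ is a DRR; GRR-detecting if for every $S\subseteq R$ with $S=S^{-1}$, $\mathrm{Aut}(R)_S=1$ implies $\mathrm{Cay}(R,S)$ is a GRR. *)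

From mathcomp Require Import all_boot all_fingroup.
Set Implicit Arguments. Unset Strict Implicit. Unset Printing Implicit Defensive.
Import GroupScope.
Local Open Scope group_scope.

Section Cayley.
Variable gT : finGroupType.

(* Automorphisms of the Cayley digraph Cay(R,S), R = [set: gT]:
   arcs r -> s r (s in S), i.e. (x,y) is an arc iff y * x^-1 \in S. *)
Definition cay_aut (S : {set gT}) : {set {perm gT}} :=
  [set p : {perm gT} | [forall x, forall y,
     (p y * (p x)^-1 \in S) == (y * x^-1 \in S)]].

Definition right_reg : {set {perm gT}} :=
  [set p : {perm gT} | [exists g, [forall x, p x == x * g]]].

Definition is_DRR (S : {set gT}) : Prop := cay_aut S = right_reg.
Definition is_GRR (S : {set gT}) : Prop := S^-1 = S /\ is_DRR S.

Definition Aut_fix (S : {set gT}) : {set {perm gT}} :=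
  [set a in Aut [set: gT] | a @: S == S].

Definition DRR_detecting : Prop :=
  forall S : {set gT}, Aut_fix S = 1 -> is_DRR S.
Definition GRR_detecting : Prop :=
  forall S : {set gT}, S^-1 = S -> Aut_fix S = 1 -> is_GRR S.
End Cayley.

From mathcomp Require Import all_boot all_fingroup.
Set Implicit Arguments. Unset Strict Implicit. Unset Printing Implicit Defensive.
Import GroupScope.
Local Open Scope group_scope.

(* Pick 1 <> k in K and let p act as x |-> x k on H and as the identity outside
   H.  An arc inside H is moved by a right translation; an arc x -> y between H
   and its complement has its label y x^-1 outside H multiplied on one side by a
   conjugate of k, which lies in K since K <| H, and S \ H is a union of left
   and of right K-cosets.  So p is an automorphism of Cay(R,S); it fixes the
   points outside H but moves 1, so it is not a right translation. *)

Section CosetShift.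
Variables (gT : finGroupType) (H : {group gT}) (k : gT).
Hypothesis kH : k \in H.

Definition coset_shift x := if x \in H then x * k else x.

Lemma coset_shift_inj : injective coset_shift.
Proof.
move=> x y; rewrite /coset_shift.
case: ifP => xH; case: ifP => yH //.
- exact: mulIg.
- by move=> exy; move: yH; rewrite -exy groupMr // xH.
- by move=> exy; move: xH; rewrite exy groupMr // yH.
Qed.

Definition coset_shift_perm : {perm gT} := perm coset_shift_inj.

Lemma coset_shift_perm_not_right_reg :
  k != 1 -> H \proper [set: gT] -> coset_shift_perm \notin right_reg gT.
Proof.
move=> k1 /properP [_ [z _ zH]]; apply: contra k1.
rewrite inE => /existsP [g /forallP shift_g].
have := shift_g 1; rewrite permE /coset_shift group1 !mul1g => /eqP ->.
have := shift_g z; rewrite permE /coset_shift (negbTE zH) => /eqP zg.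
by apply/eqP/(mulgI z); rewrite mulg1 -zg.
Qed.

End CosetShift.

Lemma mem_lmul_stable (gT : finGroupType) (K : {group gT}) (A : {set gT}) w g :
  K * A = A -> w \in K -> (w * g \in A) = (g \in A).
Proof.
move=> KA wK; apply/idP/idP => [wgA | gA]; last by rewrite -KA mem_mulg.
by rewrite -(mulKg w g) -KA mem_mulg ?groupV.
Qed.

Lemma mem_rmul_stable (gT : finGroupType) (K : {group gT}) (A : {set gT}) g w :
  A * K = A -> w \in K -> (g * w \in A) = (g \in A).
Proof.
move=> AK wK; apply/idP/idP => [gwA | gA]; last by rewrite -AK mem_mulg.
by rewrite -(mulgK w g) -AK mem_mulg ?groupV.
Qed.

Section NotDRR.
Variables (gT : finGroupType) (S : {set gT}) (K H : {group gT}).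
Hypotheses (nKH : K <| H) (KS : K * (S :\: H) = S :\: H)
  (SK : (S :\: H) * K = S :\: H).

Let sKH : K \subset H := normal_sub nKH.

Lemma mem_outside_mulKl g w :
  g \notin H -> w \in K -> (w * g \in S) = (g \in S).
Proof.
move=> gH wK; have := mem_lmul_stable g KS wK.
by rewrite !inE (groupMl _ (subsetP sKH w wK)) (negbTE gH).
Qed.

Lemma mem_outside_mulKr g w :
  g \notin H -> w \in K -> (g * w \in S) = (g \in S).
Proof.
move=> gH wK; have := mem_rmul_stable g SK wK.
by rewrite !inE (groupMr _ (subsetP sKH w wK)) (negbTE gH).
Qed.

Lemma conj_mem_normal h w : h \in H -> w \in K -> h * w * h^-1 \in K.
Proof.
move=> hH wK; have -> : h * w * h^-1 = w ^ h^-1 by rewrite /conjg invgK mulgA.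
by rewrite memJ_norm // (subsetP (normal_norm nKH)) ?groupV.
Qed.

Lemma coset_shift_perm_cay_aut k (kK : k \in K) :
  coset_shift_perm (subsetP sKH k kK) \in cay_aut S.
Proof.
rewrite inE; apply/forallP => x; apply/forallP => y; apply/eqP.
rewrite !permE /coset_shift; case: ifP => yH; case: ifP => xH //.
- by rewrite invMg mulgA mulgK.
- have -> : y * k * x^-1 = (y * k * y^-1) * (y * x^-1) by rewrite !mulgA mulgKV.
  by rewrite mem_outside_mulKl ?conj_mem_normal // groupMl ?groupV ?xH.
- have -> : y * (x * k)^-1 = (y * x^-1) * (x * k^-1 * x^-1).
    by rewrite invMg !mulgA mulgKV.
  by rewrite mem_outside_mulKr ?conj_mem_normal ?groupV // groupMr ?groupV ?yH.
Qed.

Lemma not_DRR_of_K_stable : K :!=: 1 -> H \proper [set: gT] -> ~ is_DRR S.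
Proof.
move=> /trivgPn [k kK k1] pH DRR_S.
have := coset_shift_perm_cay_aut kK; rewrite DRR_S.
by apply/negP; apply: coset_shift_perm_not_right_reg.
Qed.

End NotDRR.

Theorem corollary2p3 (gT : finGroupType) (S : {set gT}) (K H : {group gT}) :
  K :!=: 1 -> K <| H -> H \proper [set: gT] ->
  K * (S :\: H) = S :\: H -> (S :\: H) * K = S :\: H ->
  Aut_fix S = 1 ->
  (~ is_DRR S /\ ~ DRR_detecting gT) /\
  (S^-1 = S -> ~ is_GRR S /\ ~ GRR_detecting gT).
Proof.
move=> K1 nKH pH KS SK Aut1.
have notDRR := not_DRR_of_K_stable nKH KS SK K1 pH.
split=> [|Sinv]; split=> [|detecting] //.
- exact/notDRR/detecting.
- by case.
- by case: (detecting S Sinv Aut1).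
Qed.
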